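(* Let $\Gamma$ be a fixed graph on $K$ vertices and assume $K=o(\sqrt n)$, $\mathbb{E}_0(X_\Gamma)=\omega(1)$ and $\mathbb{E}_0(L^2)=1+o(1)$. Define \[ \mathcal I_\Gamma=\frac{1}{X_\Gamma^2}\sum_{\Gamma',\Gamma''}\mathbf 1_{\Gamma'\cap\Gamma''\neq\emptyset}, \] where $\Gamma'$ and $\Gamma''$ range over all copies of $\Gamma$ in $G$ and $\Gamma'\cap\Gamma''\ne\emptyset$ means their vertex sets intersect (with $\mathcal I_\Gamma:=0$ when $X_\Gamma=0$). Then $\mathbb{E}_0(\mathcal I_\Gamma)=o(1)$.
   Context: Model: $n$ nodes, $\lambda>0$. $\mathbb{P}_0$: $G\sim\mathcal G(n,\lambda/n)$. $\mathbb{P}_1$: $G=G_0\cup G'$ with $G_0\sim\mathcal G(n,\lambda/n)$ and $G'$ the image of $\Gamma$ under a uniformly random injection of its vertex set into $[n]$ independent of $G_0$. $X_\Gamma$ is the number of copies (subgraphs isomorphic to $\Gamma$) of $\Gamma$ in $G$; $L=\mathbb{P}_1(G)/\mathbb{P}_0(G)$; $\mathbb{E}_0$ is expectation under $\mathbb{P}_0$. Asymptotics as $n\to\infty$. *)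

From HB Require Import structures.
From mathcomp Require Import all_boot all_order all_algebra.
Set Implicit Arguments. Unset Strict Implicit. Unset Printing Implicit Defensive.
Import Order.TTheory GRing.Theory Num.Theory.
Local Open Scope ring_scope.

(* A simple graph on vertex set 'I_n is given by its edge set: a set of
   2-element subsets of 'I_n. *)
Definition graph_on (n : nat) := {set {set 'I_n}}.

Definition is_graph (n : nat) (E : graph_on n) : bool :=
  [forall e in E, #|e| == 2]%N.

Definition img_edges (K n : nat) (f : {ffun 'I_K -> 'I_n}) (Gam : graph_on K)
  : graph_on n := [set [set f x | x in e] | e : {set 'I_K} in Gam].

(* Copies of Gam in G: subgraphs (V, F) of G isomorphic to Gam, i.e. images
   of Gam under an injection 'I_K -> 'I_n whose edges all lie in G. *)
Definition copies (K n : nat) (Gam : graph_on K) (G : graph_on n)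
  : {set ({set 'I_n} * graph_on n)} :=
  [set c | [exists f : {ffun 'I_K -> 'I_n},
     [&& injectiveb f, c.1 == [set f x | x in [set: 'I_K]],
         c.2 == img_edges f Gam & c.2 \subset G]]].

Definition X_count (K n : nat) (Gam : graph_on K) (G : graph_on n) : nat :=
  #|copies Gam G|.

Definition I_Gam {R : realFieldType} (K n : nat) (Gam : graph_on K)
  (G : graph_on n) : R :=
  let X := X_count Gam G in
  if X == 0%N then 0 else
  (#|[set pp in setX (copies Gam G) (copies Gam G)
        | pp.1.1 :&: pp.2.1 != set0]|%:R) / (X%:R ^+ 2).

Definition P0 {R : realFieldType} (n : nat) (p : R) (G : graph_on n) : R :=
  if is_graph G then p ^+ #|G| * (1 - p) ^+ ('C(n, 2) - #|G|) else 0.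

Definition E0 {R : realFieldType} (n : nat) (p : R) (F : graph_on n -> R) : R :=
  \sum_(G : graph_on n) P0 p G * F G.

(* Planted model: G = G0 ∪ sigma(Gam), G0 ~ G(n,p), sigma a uniform
   random injection 'I_K -> 'I_n independent of G0. *)
Definition P1 {R : realFieldType} (K n : nat) (p : R) (Gam : graph_on K)
  (G : graph_on n) : R :=
  (\sum_(f : {ffun 'I_K -> 'I_n} | injectiveb f)
     \sum_(G0 : graph_on n) P0 p G0 * ((G0 :|: img_edges f Gam) == G)%:R)
  / (#|[set f : {ffun 'I_K -> 'I_n} | injectiveb f]|%:R).

Definition Lratio {R : realFieldType} (K n : nat) (p : R) (Gam : graph_on K)
  (G : graph_on n) : R := P1 p Gam G / P0 p G.

From HB Require Import structures.
From mathcomp Require Import all_boot all_order all_algebra.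
From mathcomp Require Import zify ring lra.
Import Order.TTheory GRing.Theory Num.Theory.
Set Implicit Arguments. Unset Strict Implicit. Unset Printing Implicit Defensive.
Local Open Scope ring_scope.

(* Let Z(G) count the injections f : 'I_K -> 'I_n mapping every edge of Gam
   into G, and W(G), V(G) the pairs of such injections whose vertex images
   meet, resp. are disjoint, so that Z^2 = W + V.  Every copy of Gam is the
   image of exactly #|Aut Gam| injections, hence I_Gam = W / Z^2; likewise
   L = Z / mu with mu = E0 Z = n^_K p^|Gam|.  Splitting on Z >= mu/2 gives
   pointwise W / Z^2 <= 4 (W + (Z - mu)^2) / mu^2, and taking expectations
   with E0 V = n^_K (n-K)^_K p^(2|Gam|),
     E0 I_Gam <= 8 (E0 L^2 - 1) + 4 (1 - (n-K)^_K / n^_K)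
              <= 8 (E0 L^2 - 1) + 8 K^2 / n,
   which tends to 0. *)

Lemma sum_subsets_binomial (R : comPzSemiRingType) (T : finType) (U : {set T}) (x y : R) :
  \sum_(S : {set T} | S \subset U) x ^+ #|S| * y ^+ (#|U| - #|S|) = (x + y) ^+ #|U|.
Proof.
rewrite addrC exprDn (partition_big (fun S : {set T} => (inord #|S| : 'I_(#|U|).+1)) predT) //=.
apply: eq_bigr => k _.
transitivity (\sum_(S : {set T} | (S \subset U) && (#|S| == k)) y ^+ (#|U| - k) * x ^+ k).
  apply: eq_big => S; last first.
    move=> /andP[sSU /eqP <-]; rewrite inordK ?ltnS ?subset_leq_card //.
    by rewrite mulrC.
  case sSU: (S \subset U) => //=.
  have leSU : (#|S| < #|U|.+1)%N by rewrite ltnS subset_leq_card.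
  by apply/eqP/eqP => [<- | ->]; [rewrite inordK | apply: val_inj; rewrite /= inordK].
by rewrite sumr_const -cards_draws cardsE.
Qed.

Lemma sum_set_interval (T : finType) (V : nmodType) (lo hi : {set T}) (F : {set T} -> V) :
  lo \subset hi ->
  \sum_(G : {set T} | (lo \subset G) && (G \subset hi)) F G =
  \sum_(S : {set T} | S \subset hi :\: lo) F (lo :|: S).
Proof.
move=> slh; rewrite (reindex_onto (fun S => lo :|: S) (fun G => G :\: lo)) /=; last first.
  by move=> G /andP[slG _]; rewrite setDE setUIr setUCr setIT (setUidPr slG).
apply: eq_bigl => S; rewrite subsetUl subUset slh setDUl setDv set0U subsetD /=.
by congr (_ && _); apply/eqP/setDidPl.
Qed.

Lemma sumr_indicator (R : pzSemiRingType) (T : finType) (P : pred T) :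
  \sum_(x : T) (P x)%:R = #|[set x | P x]|%:R :> R.
Proof. by rewrite -sum1dep_card natr_sum [RHS]big_mkcond; apply: eq_bigr => x _; case: (P x). Qed.

Lemma card_uniform_fibres (T U : finType) (A : {set T}) (B : {set U}) (phi : T -> U) (k : nat) :
  {in A, forall x, phi x \in B} ->
  {in B, forall y, #|[set x in A | phi x == y]| = k} -> #|A| = (k * #|B|)%N.
Proof.
move=> phiAB fibre; rewrite -sum1_card (partition_big phi (mem B)) //= mulnC -sum_nat_const.
by apply: eq_bigr => y yB; rewrite -(fibre y yB) -sum1dep_card.
Qed.

Lemma one_sub_sum_le_prod (R : realDomainType) (I : Type) (r : seq I) (x : I -> R) :
  (forall i, 0 <= x i <= 1) -> 1 - \sum_(i <- r) x i <= \prod_(i <- r) (1 - x i).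
Proof.
move=> x01; elim: r => [|i r IH]; first by rewrite !big_nil subr0.
rewrite !big_cons; have /andP[xi_ge0 xi_le1] := x01 i.
have P_ge0 : 0 <= \prod_(j <- r) (1 - x j).
  by apply: prodr_ge0 => j _; have /andP[_] := x01 j; rewrite subr_ge0.
have S_ge0 : 0 <= \sum_(j <- r) x j by apply: sumr_ge0 => j _; case/andP: (x01 j).
nra.
Qed.

Lemma one_sub_ffact_ratio_le (R : realFieldType) (n K : nat) : (0 < n)%N -> (2 * K <= n)%N ->
  1 - ((n - K) ^_ K)%:R / (n ^_ K)%:R <= 2 * K%:R ^+ 2 / n%:R :> R.
Proof.
move=> n_gt0 le_2Kn.
pose x (i : 'I_K) : R := K%:R / (n - i)%:R.
have n_gt0R : 0 < n%:R :> R by rewrite ltr0n.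
have ni_gt0 (i : 'I_K) : 0 < (n - i)%:R :> R by rewrite ltr0n; have := ltn_ord i; lia.
have ratioE : ((n - K) ^_ K)%:R / (n ^_ K)%:R = \prod_(i < K) (1 - x i) :> R.
  rewrite !ffact_prod !natr_prod -prodfV -big_split /=; apply: eq_bigr => i _.
  have le_Kni : (K <= n - i)%N by have := ltn_ord i; lia.
  by rewrite subnAC natrB // mulrBl mulfV ?gt_eqF.
have x_le (i : 'I_K) : 0 <= x i <= 1 /\ x i <= 2 * K%:R / n%:R.
  have le_Kni : K%:R <= (n - i)%:R :> R by rewrite ler_nat; have := ltn_ord i; lia.
  have le_n2ni : n%:R <= 2 * (n - i)%:R :> R by rewrite -natrM ler_nat; have := ltn_ord i; lia.
  split; first by rewrite /x divr_ge0 ?ler0n //= ler_pdivrMr ?mul1r.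
  have K_ge0 : 0 <= K%:R :> R by rewrite ler0n.
  by rewrite /x ler_pdivrMr // mulrAC ler_pdivlMr //; nra.
have sum_le : \sum_(i < K) x i <= 2 * K%:R ^+ 2 / n%:R.
  apply: le_trans (ler_sum _ (fun i _ => proj2 (x_le i))) _.
  by rewrite sumr_const card_ord -mulr_natr le_eqVlt; apply/predU1l; ring.
have := one_sub_sum_le_prod (index_enum 'I_K) (fun i => proj1 (x_le i)).
by rewrite ratioE; lra.
Qed.

Lemma double_le_of_lt_sqrt (R : rcfType) (n K : nat) :
  (2 * K)%:R < Num.sqrt (n%:R : R) -> (2 * K <= n)%N.
Proof.
move=> lt_sqrt; have : ((2 * K) ^ 2)%:R < n%:R :> R.
  have sqr_n : n%:R = Num.sqrt (n%:R : R) ^+ 2 by rewrite sqr_sqrtr ?ler0n.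
  by rewrite natrX [X in _ < X]sqr_n ltr_pXn2r ?nnegrE ?sqrtr_ge0 ?ler0n.
rewrite ltr_nat; nia.
Qed.

Lemma ratio_sqr_le (R : realFieldType) (mu z w : R) : 0 < mu -> 0 <= w <= z ^+ 2 ->
  w / z ^+ 2 <= 4 / mu ^+ 2 * (w + (z - mu) ^+ 2).
Proof.
move=> mu_gt0 /andP[w_ge0 w_le].
have mu2_gt0 : 0 < mu ^+ 2 by rewrite exprn_gt0.
have c_ge0 : 0 <= 4 / mu ^+ 2 by rewrite divr_ge0 // ltW.
rewrite mulrDr; have [z_large | z_small] := lerP mu (2 * z).
  apply: ler_wpDr; first by rewrite mulr_ge0 ?sqr_ge0.
  have z2_gt0 : 0 < z ^+ 2 by rewrite exprn_gt0 //; lra.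
  rewrite mulrC ler_wpM2r // ler_pdivlMr // mulrC ler_pdivrMr //; nra.
apply: ler_wpDl; first exact: mulr_ge0.
apply: (@le_trans _ _ 1).
  have [-> | z_neq0] := eqVneq z 0; first by rewrite expr0n invr0 mulr0.
  by rewrite ler_pdivrMr ?mul1r // exprn_even_gt0.
rewrite mulrAC ler_pdivlMr // mul1r; nra.
Qed.

Section ErdosRenyi.
Variables (R : realFieldType) (n : nat).
Implicit Types (p : R) (A G : graph_on n).

Definition complete_graph : graph_on n := [set e : {set 'I_n} | #|e| == 2%N].

Lemma is_graphE G : is_graph G = (G \subset complete_graph).
Proof.
apply/forallP/subsetP => [gG e eG | sG e]; first by rewrite inE; have := gG e; rewrite eG.
by apply/implyP => /sG; rewrite inE.
Qed.

Lemma P0E p G : P0 p G =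
  if G \subset complete_graph then
    p ^+ #|G| * (1 - p) ^+ (#|complete_graph| - #|G|) else 0.
Proof. by rewrite /P0 is_graphE card_draws card_ord. Qed.

Lemma P0_graphE p G : G \subset complete_graph ->
  P0 p G = p ^+ #|G| * (1 - p) ^+ (#|complete_graph| - #|G|).
Proof. by move=> sGE; rewrite P0E sGE. Qed.

Lemma sum_P0_interval p (lo hi : graph_on n) :
  lo \subset hi -> hi \subset complete_graph ->
  \sum_(G : graph_on n | (lo \subset G) && (G \subset hi)) P0 p G =
  p ^+ #|lo| * (1 - p) ^+ (#|complete_graph| - #|hi|).
Proof.
move=> slh shE; rewrite sum_set_interval //.
have card_hi : #|hi| = (#|lo| + #|hi :\: lo|)%N by rewrite -(cardsID lo hi) (setIidPr slh).
have le_hi : (#|hi| <= #|complete_graph|)%N by exact: subset_leq_card.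
have binom : \sum_(S : graph_on n | S \subset hi :\: lo)
    p ^+ #|S| * (1 - p) ^+ (#|hi :\: lo| - #|S|) = 1.
  by rewrite sum_subsets_binomial subrKC expr1n.
rewrite -[RHS]mulr1 -[X in _ = _ * X]binom big_distrr /=; apply: eq_bigr => S sSD.
have disj_S : [disjoint lo & S] by rewrite disjoint_sym; move: sSD; rewrite subsetD => /andP[].
have le_S : (#|S| <= #|hi :\: lo|)%N by exact: subset_leq_card.
have sS_hi : S \subset hi by apply: subset_trans sSD (subsetDl _ _).
rewrite P0_graphE; last by rewrite subUset !(subset_trans _ shE).
rewrite cardsU (disjoint_setI0 disj_S) cards0 subn0 exprD mulrACA -!exprD.
congr (_ * _ ^+ _); move: card_hi le_hi le_S.
(* lia does not identify the cardinals up to their canonical instances. *)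
by move: #|complete_graph| #|hi| #|lo| #|S| #|hi :\: lo|; lia.
Qed.

Lemma sum_P0 p : \sum_(G : graph_on n) P0 p G = 1.
Proof.
have := sum_P0_interval p (sub0set complete_graph) (subxx _).
rewrite cards0 subnn !expr0 mulr1 => <-; rewrite [RHS]big_mkcond.
by apply: eq_bigr => G _; rewrite sub0set /=; case: ifP => // sGE; rewrite P0E sGE.
Qed.

Lemma E0_supset p A : A \subset complete_graph ->
  E0 p (fun G => (A \subset G)%:R) = p ^+ #|A|.
Proof.
move=> sAE; have := sum_P0_interval p sAE (subxx _).
rewrite subnn expr0 mulr1 => <-; rewrite [RHS]big_mkcond; apply: eq_bigr => G _.
have [sGE | not_graph] := boolP (G \subset complete_graph); last first.
  by rewrite andbF P0E (negPf not_graph) mul0r.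
by rewrite andbT; case: ifP; rewrite ?mulr1 ?mulr0.
Qed.

Lemma sum_P0_setU p A G : 0 < p -> A \subset complete_graph -> G \subset complete_graph ->
  \sum_(G0 : graph_on n) P0 p G0 * ((G0 :|: A) == G)%:R =
  (A \subset G)%:R * P0 p G / p ^+ #|A|.
Proof.
move=> p_gt0 sAE sGE; case: (boolP (A \subset G)) => sAG; last first.
  rewrite !mul0r; apply: big1 => G0 _; case: eqP => [GE | _]; last exact: mulr0.
  by rewrite -GE subsetUr in sAG.
rewrite mul1r.
transitivity (\sum_(G0 : graph_on n | (G :\: A \subset G0) && (G0 \subset G)) P0 p G0).
  rewrite [RHS]big_mkcond; apply: eq_bigr => G0 _.
  have -> : ((G0 :|: A) == G) = (G :\: A \subset G0) && (G0 \subset G).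
    apply/eqP/andP => [<- | [sG0 s0G]]; first by rewrite subDset setUC subsetUr subxx.
    by apply/eqP; rewrite eqEsubset subUset s0G sAG /= setUC -subDset.
  by case: ifP; rewrite ?mulr1 ?mulr0.
rewrite sum_P0_interval ?subsetDl // P0_graphE //.
have card_G : #|G| = (#|A| + #|G :\: A|)%N by rewrite -(cardsID A G) (setIidPr sAG).
by rewrite [in p ^+ #|G|]card_G exprD -(mulrA (p ^+ #|A|)) [RHS]mulrC mulKf // expf_neq0 // gt_eqF.
Qed.

Lemma P0_ge0 p G : 0 <= p <= 1 -> 0 <= P0 p G.
Proof.
by case/andP=> p0 p1; rewrite P0E; case: ifP => // _; rewrite mulr_ge0 ?exprn_ge0 ?subr_ge0.
Qed.

Lemma P0_gt0 p G : 0 < p < 1 -> G \subset complete_graph -> 0 < P0 p G.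
Proof. by case/andP=> p0 p1 sGE; rewrite P0_graphE // mulr_gt0 ?exprn_gt0 ?subr_gt0. Qed.

Lemma E0_sum p (I : finType) (F : I -> graph_on n -> R) :
  E0 p (fun G => \sum_i F i G) = \sum_i E0 p (F i).
Proof. by rewrite /E0 exchange_big; apply: eq_bigr => G _; rewrite mulr_sumr. Qed.

Lemma E0_affine p (a b c d : R) (F1 F2 F3 : graph_on n -> R) :
  E0 p (fun G => a * F1 G + b * F2 G + c * F3 G + d) =
  a * E0 p F1 + b * E0 p F2 + c * E0 p F3 + d.
Proof.
rewrite /E0 -[in RHS](mulr1 d) -(sum_P0 p) !mulr_sumr -!big_split; apply: eq_bigr => G _ /=; ring.
Qed.

Lemma eq_E0 p (F1 F2 : graph_on n -> R) : F1 =1 F2 -> E0 p F1 = E0 p F2.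
Proof. by move=> eqF; apply: eq_bigr => G _; rewrite eqF. Qed.

Lemma ler_E0 p (F1 F2 : graph_on n -> R) : 0 <= p <= 1 ->
  (forall G, F1 G <= F2 G) -> E0 p F1 <= E0 p F2.
Proof. by move=> p01 leF; apply: ler_sum => G _; rewrite ler_wpM2l ?P0_ge0. Qed.

Lemma E0_ge0 p (F : graph_on n -> R) : 0 <= p <= 1 ->
  (forall G, 0 <= F G) -> 0 <= E0 p F.
Proof. by move=> p01 F_ge0; apply: sumr_ge0 => G _; rewrite mulr_ge0 ?P0_ge0. Qed.

End ErdosRenyi.

Section Embeddings.
Variables (n K : nat) (Gam : graph_on K).
Hypothesis graph_Gam : is_graph Gam.
Local Notation map := {ffun 'I_K -> 'I_n}.
Implicit Types (f g : map) (G : graph_on n).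

Definition vertex_image f : {set 'I_n} := [set f x | x in [set: 'I_K]].
Definition edge_image f : graph_on n := img_edges f Gam.
Definition copy_of f := (vertex_image f, edge_image f).
Definition embeds f G := injectiveb f && (edge_image f \subset G).

Lemma edge_image_complete f : injectiveb f -> edge_image f \subset complete_graph n.
Proof.
move=> /injectiveP inj_f; apply/subsetP => _ /imsetP[e eG ->].
by rewrite inE card_imset //; have /implyP/(_ eG) := forallP graph_Gam e.
Qed.

Lemma card_edge_image f : injectiveb f -> #|edge_image f| = #|Gam|.
Proof. by move=> /injectiveP inj_f; rewrite card_imset //; exact: imset_inj. Qed.

Lemma edge_image_sub f e : e \in edge_image f -> e \subset vertex_image f.
Proof. by case/imsetP=> e0 _ ->; apply/imsetS/subsetT. Qed.

Lemma edge_image_disjoint f g : vertex_image f :&: vertex_image g = set0 ->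
  edge_image f :&: edge_image g = set0.
Proof.
move=> disj_fg; apply/setP => e; rewrite !inE; apply/negP => /andP[ef eg].
have [x xe] : exists x, x \in e.
  case/imsetP: ef => e0 e0G ->; have /implyP/(_ e0G) := forallP graph_Gam e0.
  by case/cards2P=> x [y [_ ->]]; exists (f x); apply/imsetP; exists x; rewrite ?set21.
have /setP/(_ x) := disj_fg.
by rewrite !inE (subsetP (edge_image_sub ef)) ?(subsetP (edge_image_sub eg)).
Qed.

Definition automorphisms : {set {ffun 'I_K -> 'I_K}} :=
  [set h : {ffun 'I_K -> 'I_K} | injectiveb h && (img_edges h Gam == Gam)].

Definition precomp f (h : {ffun 'I_K -> 'I_K}) : map := [ffun x => f (h x)].

Lemma img_edges_precomp f h :
  img_edges (precomp f h) Gam = img_edges f (img_edges h Gam).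
Proof.
rewrite /img_edges -imset_comp; apply: eq_imset => e /=.
by rewrite -imset_comp; apply: eq_imset => x /=; rewrite ffunE.
Qed.

Lemma copy_of_precomp f h : h \in automorphisms -> copy_of (precomp f h) = copy_of f.
Proof.
rewrite inE => /andP[/injectiveP inj_h /eqP autGam].
rewrite /copy_of /edge_image img_edges_precomp autGam; congr (_, _).
have onto_h : h @: [set: 'I_K] = [set: 'I_K].
  by apply/eqP; rewrite eqEcard subsetT card_imset ?leqnn.
rewrite /vertex_image -[in RHS]onto_h -imset_comp; apply: eq_imset => x /=.
by rewrite ffunE.
Qed.

Lemma precomp_inj f : injective f -> injective (precomp f).
Proof.
move=> inj_f h1 h2 /ffunP eq12; apply/ffunP => x.
by apply: inj_f; have := eq12 x; rewrite !ffunE.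
Qed.

Lemma precomp_of_same_copy f0 f : injectiveb f0 -> injectiveb f ->
  copy_of f = copy_of f0 -> exists2 h, h \in automorphisms & f = precomp f0 h.
Proof.
move=> /injectiveP inj_f0 /injectiveP inj_f [same_vertices same_edges].
pose h := [ffun x => odflt x [pick y | f0 y == f x]].
have f0h x : f0 (h x) = f x.
  rewrite ffunE; case: pickP => [y /eqP // | no_preimage].
  have : f x \in vertex_image f0 by rewrite -same_vertices; apply/imsetP; exists x.
  by case/imsetP=> y _ fxE; have := no_preimage y; rewrite fxE eqxx.
have f_precomp : f = precomp f0 h by apply/ffunP => x; rewrite ffunE f0h.
exists h => //; rewrite inE; apply/andP; split.
  by apply/injectiveP => x1 x2 eq_h; apply: inj_f; rewrite -!f0h eq_h.
apply/eqP/(imset_inj (imset_inj inj_f0)).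
by rewrite -/(img_edges f0 _) -img_edges_precomp -f_precomp.
Qed.

Lemma card_same_copy f0 : injectiveb f0 ->
  #|[set f : map | injectiveb f && (copy_of f == copy_of f0)]| = #|automorphisms|.
Proof.
move=> inj_f0; rewrite -(card_imset _ (precomp_inj (injectiveP _ inj_f0))).
congr #|pred_of_set _|; apply/setP => f; rewrite inE; apply/andP/imsetP.
  by case=> inj_f /eqP/(precomp_of_same_copy inj_f0 inj_f).
case=> h aut_h ->; rewrite copy_of_precomp //; split => //.
case/setIdP: aut_h => /injectiveP inj_h _; apply/injectiveP => x y; rewrite !ffunE.
by move=> /(injectiveP _ inj_f0) /inj_h.
Qed.

Lemma copiesP G c :
  reflect (exists f, [/\ injectiveb f, c = copy_of f & edge_image f \subset G])
          (c \in copies Gam G).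
Proof.
rewrite inE; apply: (iffP existsP) => [[f] | [f [inj_f -> sG]]]; last first.
  by exists f; rewrite inj_f !eqxx.
case/and4P=> inj_f /eqP c1 /eqP c2 sG.
exists f; split => //; last by rewrite /edge_image -c2.
by case: c c1 c2 {sG} => ? ? /= -> ->.
Qed.

Lemma copy_of_copies_sub f G : copy_of f \in copies Gam G -> edge_image f \subset G.
Proof. by case/copiesP=> f0 [_ [_ ->]]. Qed.

Lemma card_copy_fibre G c : c \in copies Gam G ->
  #|[set f : map | injectiveb f && (copy_of f == c)]| = #|automorphisms|.
Proof. by case/copiesP=> f0 [inj_f0 -> _]; exact: card_same_copy. Qed.

Lemma card_embeddings G :
  #|[set f : map | embeds f G]| = (#|automorphisms| * X_count Gam G)%N.
Proof.
apply: card_uniform_fibres => [f | c cG].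
  by rewrite inE => /andP[inj_f sG]; apply/copiesP; exists f.
rewrite -(card_copy_fibre cG); apply: eq_card => f; rewrite !inE.
case: eqP => [fc | _]; rewrite ?andbF // !andbT.
by rewrite /embeds copy_of_copies_sub ?andbT // fc.
Qed.

Definition meeting_copies G :=
  [set cc in setX (copies Gam G) (copies Gam G) | cc.1.1 :&: cc.2.1 != set0].

Lemma card_meeting_embeddings G :
  #|[set fg : map * map | [&& embeds fg.1 G, embeds fg.2 G &
      vertex_image fg.1 :&: vertex_image fg.2 != set0]]| =
  (#|automorphisms| ^ 2 * #|meeting_copies G|)%N.
Proof.
pose copies_of (fg : map * map) := (copy_of fg.1, copy_of fg.2).
apply: (@card_uniform_fibres _ _ _ _ copies_of) => [[f g] | [c d] cdG].
  rewrite inE /= => /and3P[/andP[inj_f sfG] /andP[inj_g sgG] meet_fg].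
  apply/setIdP; split => //; apply/setXP.
  by split; apply/copiesP; [exists f | exists g].
case/setIdP: cdG => /setXP[/= cG dG] meet_cd.
rewrite expnS expn1 -{1}(card_copy_fibre cG) -(card_copy_fibre dG) -cardsX.
apply: eq_card => -[f g]; rewrite !inE /= xpair_eqE.
case: (copy_of f =P c) => [fc | _]; last by rewrite /= ?(andbF, andFb).
case: (copy_of g =P d) => [gd | _]; last by rewrite /= ?(andbF, andFb).
rewrite /embeds !copy_of_copies_sub ?fc ?gd //.
by rewrite -[vertex_image f]/(copy_of f).1 -[vertex_image g]/(copy_of g).1 fc gd meet_cd !andbT.
Qed.

Lemma automorphisms_gt0 : (0 < #|automorphisms|)%N.
Proof.
apply/card_gt0P; exists [ffun x => x]; rewrite inE; apply/andP; split.
  by apply/injectiveP => x y; rewrite !ffunE.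
apply/eqP; rewrite /img_edges -[RHS]imset_id; apply: eq_imset => e /=.
by rewrite -[RHS]imset_id; apply: eq_imset => x; rewrite ffunE.
Qed.

End Embeddings.

Section Counts.
Variables (R : realFieldType) (n K : nat) (Gam : graph_on K).
Local Notation map := {ffun 'I_K -> 'I_n}.
Implicit Types (G : graph_on n).

Definition emb_count G : R := \sum_(f : map) (embeds Gam f G)%:R.

Definition meet_count G : R := \sum_(f : map) \sum_(g : map)
  [&& embeds Gam f G, embeds Gam g G & vertex_image f :&: vertex_image g != set0]%:R.

Definition disjoint_count G : R := \sum_(f : map) \sum_(g : map)
  [&& embeds Gam f G, embeds Gam g G & vertex_image f :&: vertex_image g == set0]%:R.

Lemma emb_count_sqr G : emb_count G ^+ 2 = meet_count G + disjoint_count G.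
Proof.
rewrite expr2 mulr_suml -big_split; apply: eq_bigr => f _ /=.
rewrite mulr_sumr -big_split; apply: eq_bigr => g _ /=.
by rewrite -natrM -natrD mulnb; case: (embeds _ f G); case: (embeds _ g G); case: eqP.
Qed.

Lemma disjoint_count_ge0 G : 0 <= disjoint_count G.
Proof. by do 2 apply: sumr_ge0 => ? _. Qed.

Lemma meet_count_ge0 G : 0 <= meet_count G.
Proof. by do 2 apply: sumr_ge0 => ? _. Qed.

Lemma meet_count_le G : meet_count G <= emb_count G ^+ 2.
Proof. by rewrite emb_count_sqr lerDl disjoint_count_ge0. Qed.

Lemma I_GamE G : I_Gam Gam G = meet_count G / emb_count G ^+ 2.
Proof.
have card_emb : emb_count G = #|automorphisms Gam|%:R * (X_count Gam G)%:R.
  by rewrite -natrM -card_embeddings -sumr_indicator.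
have card_meet : meet_count G = #|automorphisms Gam|%:R ^+ 2 * #|meeting_copies Gam G|%:R.
  by rewrite -natrX -natrM -card_meeting_embeddings -sumr_indicator /meet_count pair_bigA.
rewrite /I_Gam card_emb card_meet; case: eqP => [-> | /eqP X_neq0].
  by rewrite mulr0 expr0n invr0 mulr0.
have aut_neq0 : #|automorphisms Gam|%:R != 0 :> R by rewrite pnatr_eq0 -lt0n automorphisms_gt0.
rewrite exprMn -mulf_div mulfV ?mul1r // expf_neq0 //.
Qed.

End Counts.

Section Moments.
Variables (R : realFieldType) (n K : nat) (Gam : graph_on K) (p : R).
Hypotheses (graph_Gam : is_graph Gam) (p_gt0 : 0 < p) (p_lt1 : p < 1).
Local Notation map := {ffun 'I_K -> 'I_n}.
Implicit Types (f g : map) (G : graph_on n).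

Let mu := (n ^_ K)%:R * p ^+ #|Gam|.
Local Notation Z := (@emb_count R n K Gam).
Local Notation V := (@disjoint_count R n K Gam).

Lemma card_injections : #|[set f : map | injectiveb f]| = n ^_ K.
Proof. by rewrite card_inj_ffuns !card_ord. Qed.

Lemma card_disjoint_injections f : injectiveb f ->
  #|[set g : map | injectiveb g && (vertex_image f :&: vertex_image g == set0)]| = (n - K) ^_ K.
Proof.
move=> /injectiveP inj_f.
have card_outside : #|[pred y | y \notin vertex_image f]| = (n - K)%N.
  have -> : #|[pred y | y \notin vertex_image f]| = #|~: vertex_image f|.
    by apply: eq_card => y; rewrite !inE.
  by have := cardsC (vertex_image f); rewrite card_imset // cardsT !card_ord; lia.
transitivity #|[set g : map in ffun_on [pred y | y \notin vertex_image f] | injectiveb g]|.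
  apply: eq_card => g; rewrite !inE andbC.
  congr (_ && _); rewrite setI_eq0 disjoint_sym disjoints_subset.
  apply/subsetP/ffun_onP => [sub x | avoid _ /imsetP[x _ ->]]; last by rewrite inE; exact: avoid.
  by have := sub (g x) (imset_f _ (in_setT x)); rewrite inE.
by rewrite card_inj_ffuns_on card_ord card_outside.
Qed.

Lemma E0_embeds f :
  E0 p (fun G => (embeds Gam f G)%:R) = (injectiveb f)%:R * p ^+ #|Gam|.
Proof.
rewrite /embeds; have [inj_f | _] := boolP (injectiveb f); last first.
  by rewrite mul0r /E0 big1 // => G _; rewrite mulr0.
by rewrite mul1r -(card_edge_image _ inj_f) -E0_supset ?edge_image_complete.
Qed.

Lemma E0_disjoint_embeds f g :
  E0 p (fun G => [&& embeds Gam f G, embeds Gam g G &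
                     vertex_image f :&: vertex_image g == set0]%:R) =
  [&& injectiveb f, injectiveb g & vertex_image f :&: vertex_image g == set0]%:R *
  p ^+ (2 * #|Gam|).
Proof.
have [/and3P[inj_f inj_g /eqP disj] | not_all] := boolP [&& injectiveb f, injectiveb g & _].
  rewrite mul1r (@eq_E0 _ _ _ _ (fun G => (edge_image Gam f :|: edge_image Gam g \subset G)%:R)).
    rewrite E0_supset ?subUset ?edge_image_complete // cardsU (edge_image_disjoint graph_Gam disj).
    by rewrite cards0 subn0 !card_edge_image // addnn mul2n.
  by move=> G; rewrite subUset /embeds inj_f inj_g disj eqxx andbT.
rewrite mul0r /E0 big1 // => G _; apply/eqP; rewrite mulf_eq0 pnatr_eq0 eqb0; apply/orP; right.
by apply: contra not_all => /and3P[/andP[-> _] /andP[-> _] ->].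
Qed.

Lemma E0_emb_count : E0 p Z = mu.
Proof.
rewrite E0_sum (eq_bigr _ (fun f _ => E0_embeds f)) -mulr_suml.
by rewrite sumr_indicator card_injections.
Qed.

Lemma E0_disjoint_count : E0 p V =
  (n ^_ K)%:R * ((n - K) ^_ K)%:R * p ^+ (2 * #|Gam|).
Proof.
rewrite E0_sum; under eq_bigr do rewrite E0_sum (eq_bigr _ (fun g _ => E0_disjoint_embeds _ g)).
under eq_bigr do rewrite -mulr_suml; rewrite -mulr_suml; congr (_ * _).
transitivity (\sum_(f : map) (injectiveb f)%:R * ((n - K) ^_ K)%:R : R).
  apply: eq_bigr => f _; have [inj_f | _] := boolP (injectiveb f); last by rewrite mul0r big1.
  by rewrite mul1r sumr_indicator card_disjoint_injections.
by rewrite -mulr_suml sumr_indicator card_injections.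
Qed.

Lemma P1E G : G \subset complete_graph n -> P1 p Gam G = P0 p G * Z G / mu.
Proof.
move=> sGE; rewrite /P1 card_injections.
have -> : \sum_(f : map | injectiveb f) \sum_(G0 : graph_on n)
    P0 p G0 * ((G0 :|: img_edges f Gam) == G)%:R = Z G * (P0 p G / p ^+ #|Gam|).
  rewrite mulr_suml big_mkcond; apply: eq_bigr => f _ /=; rewrite /embeds.
  have [inj_f | _] := boolP (injectiveb f); last by rewrite mul0r.
  by rewrite sum_P0_setU ?edge_image_complete ?card_edge_image // mulrA.
by rewrite /mu invfM; move: (p ^+ _) (Z G) (P0 p G) ((n ^_ K)%:R) => a b c d; ring.
Qed.

Lemma E0_Lratio_sqr : (K <= n)%N ->
  E0 p (fun G => Lratio p Gam G ^+ 2) = E0 p (fun G => Z G ^+ 2) / mu ^+ 2.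
Proof.
move=> le_Kn; rewrite /E0 mulr_suml; apply: eq_bigr => G _.
have [sGE | not_graph] := boolP (G \subset complete_graph n); last first.
  by rewrite P0E (negPf not_graph) !mul0r.
have P0_neq0 : P0 p G != 0 by rewrite gt_eqF // P0_gt0 // p_gt0 p_lt1.
have mu_neq0 : mu != 0 by rewrite mulf_neq0 ?expf_neq0 ?gt_eqF // ltr0n ffact_gt0.
rewrite /Lratio P1E //; move: P0_neq0 mu_neq0 (Z G) => /negPf P0n /negPf mun z.
by field; rewrite P0n mun.
Qed.

Lemma E0_I_Gam_le : (K <= n)%N ->
  E0 p (fun G => I_Gam Gam G) <=
  8 * (E0 p (fun G => Lratio p Gam G ^+ 2) - 1) + 4 * (1 - ((n - K) ^_ K)%:R / (n ^_ K)%:R).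
Proof.
move=> le_Kn.
have p01 : 0 <= p <= 1 by rewrite !ltW.
have N_neq0 : (n ^_ K)%:R != 0 :> R by rewrite pnatr_eq0 -lt0n ffact_gt0.
have pe_neq0 : p ^+ #|Gam| != 0 by rewrite expf_neq0 // gt_eqF.
have mu_gt0 : 0 < mu by rewrite mulr_gt0 ?exprn_gt0 // ltr0n ffact_gt0.
pose F G := 4 / mu ^+ 2 * (meet_count R Gam G + (Z G - mu) ^+ 2).
apply: (le_trans (ler_E0 (F2 := F) p01 _)).
  move=> G; rewrite I_GamE; apply: ratio_sqr_le => //.
  by rewrite meet_count_ge0 meet_count_le.
rewrite (@eq_E0 _ _ _ _ (fun G => 8 / mu ^+ 2 * Z G ^+ 2 + (- 4 / mu ^+ 2) * V G +
                                  (- 8 / mu) * Z G + 4)); last first.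
  move=> G; have W_eq : meet_count R Gam G = Z G ^+ 2 - V G.
    by rewrite emb_count_sqr addrK.
  by rewrite /F W_eq; field; rewrite gt_eqF.
rewrite E0_affine E0_Lratio_sqr // E0_emb_count E0_disjoint_count /mu mulnC exprM.
move: N_neq0 pe_neq0; move: (E0 _ _) ((n - K) ^_ K)%:R ((n ^_ K)%:R) (p ^+ #|Gam|).
move=> e D N q N_neq0 q_neq0; rewrite le_eqVlt; apply/predU1l.
by field; rewrite N_neq0 q_neq0.
Qed.

End Moments.

Lemma E0_I_Gam_between (R : realFieldType) (n K : nat) (Gam : graph_on K) (p : R) :
  is_graph Gam -> 0 < p < 1 -> (0 < n)%N -> (2 * K <= n)%N ->
  0 <= E0 p (fun G : graph_on n => I_Gam Gam G) <=
  8 * (E0 p (fun G : graph_on n => Lratio p Gam G ^+ 2) - 1) + 8 * (K%:R ^+ 2 / n%:R).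
Proof.
move=> graph_Gam /andP[p_gt0 p_lt1] n_gt0 le_2Kn; apply/andP; split.
  apply: E0_ge0 => [|G]; first by rewrite !ltW.
  by rewrite /I_Gam; case: ifP => // _; rewrite divr_ge0 ?exprn_ge0 ?ler0n.
apply: le_trans (E0_I_Gam_le graph_Gam p_gt0 p_lt1 _) _; first lia.
have := one_sub_ffact_ratio_le R n_gt0 le_2Kn; lra.
Qed.

From mathcomp Require Import all_classical all_reals all_analysis.
Import numFieldNormedType.Exports.
Unset Implicit Arguments.
Local Open Scope classical_set_scope.

Theorem lemma10 (R : realType) (lam : R) (K : nat -> nat)
  (Gam : forall n : nat, graph_on (K n)) :
  0 < lam ->
  (forall n, is_graph (Gam n)) ->
  (* K = o(sqrt n) *)
  ((K n)%:R / Num.sqrt (n%:R : R)) @[n --> \oo] --> 0 ->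
  (* E_0(X_Gamma) = omega(1) *)
  (E0 (lam / n%:R) (fun G : graph_on n => (X_count (Gam n) G)%:R : R)) @[n --> \oo] --> +oo ->
  (* E_0(L^2) = 1 + o(1) *)
  (E0 (lam / n%:R) (fun G : graph_on n => Lratio (lam / n%:R) (Gam n) G ^+ 2)) @[n --> \oo] --> (1 : R) ->
  (E0 (lam / n%:R) (fun G : graph_on n => I_Gam (Gam n) G : R)) @[n --> \oo] --> (0 : R).
Proof.
move=> lam_gt0 graph_Gam K_small _ L2_to1.
set b := fun n => (K n)%:R / Num.sqrt (n%:R : R) in K_small.
apply: (squeeze_cvgr (f := fun _ => 0) (h := fun n =>
  8 * (E0 (lam / n%:R) (fun G : graph_on n => Lratio (lam / n%:R) (Gam n) G ^+ 2) - 1)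
  + 8 * b n ^+ 2)).
- near=> n.
  have lam_lt_n : lam < n%:R by near: n; exact: nbhs_infty_gtr.
  have n_gt0 : (0 < n)%N by rewrite -(ltr0n R); exact: lt_trans lam_gt0 lam_lt_n.
  have sqrt_gt0 : 0 < Num.sqrt (n%:R : R) by rewrite sqrtr_gt0 ltr0n.
  have b_small : b n < 1 / 2 by near: n; apply: (cvgr_lt _ K_small); rewrite divr_gt0.
  have le_2Kn : (2 * K n <= n)%N.
    apply: (double_le_of_lt_sqrt (R := R)); move: b_small; rewrite /b ltr_pdivrMr // natrM.
    lra.
  have p01 : 0 < lam / n%:R < 1 by rewrite divr_gt0 ?ltr0n //= ltr_pdivrMr ?ltr0n // mul1r.
  have := E0_I_Gam_between (graph_Gam n) p01 n_gt0 le_2Kn.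
  by rewrite /b expr_div_n sqr_sqrtr ?ler0n.
- exact: cvg_cst.
- have -> : (0 : R) = 8 * (1 - 1) + 8 * 0 ^+ 2 by rewrite subrr expr0n /= !mulr0 addr0.
  apply: cvgD; apply: cvgMr; first by apply: cvgB => //; exact: cvg_cst.
  by under eq_fun do rewrite expr2; rewrite expr2; exact: cvgM.
Unshelve. all: by end_near.
Qed.
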